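(* Let $Z$ be a $d\times d$ complex matrix which is not normal, i.e. $[Z,Z^\dagger]\neq 0$. Define the $2d\times 2d$ matrix $$Q(Z)=\begin{pmatrix}\mathbb 1 & Z\\ Z^\dagger & Z^\dagger Z\end{pmatrix},$$ viewed as an operator on $\mathbb C^d\otimes\mathbb C^2$. Then $Q(Z)$ is positive semidefinite and (after normalization) is an entangled, i.e. non-separable, state on $\mathbb C^d\otimes\mathbb C^2$.
   Context: A positive semidefinite operator on a bipartite space is separable if it is a nonnegative combination of tensor products of positive semidefinite operators; otherwise it is entangled. *)

(* Complex numbers: an arbitrary numClosedFieldType C
   (algebraically closed field with conjugation, e.g. algC or C itself). *)
From HB Require Import structures.
From mathcomp Require Import all_boot all_order all_algebra.
Set Implicit Arguments. Unset Strict Implicit. Unset Printing Implicit Defensive.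
Import Order.TTheory GRing.Theory Num.Theory.
Local Open Scope ring_scope.

Export spectral.
Local Open Scope sesquilinear_scope.

(* Identification of the index set of C^m (x) C^n with 'I_(m*n),
   the canonical MathComp one (inverse of mxvec_index). *)
Definition bidx (m n : nat) (k : 'I_(m * n)) : 'I_m * 'I_n :=
  enum_val (cast_ord (esym (mxvec_cast m n)) k).

Definition kron {C : numClosedFieldType} (m n : nat)
    (A : 'M[C]_m) (B : 'M[C]_n) : 'M[C]_(m * n) :=
  \matrix_(k, l) (A (bidx k).1 (bidx l).1 * B (bidx k).2 (bidx l).2).

Definition psd {C : numClosedFieldType} (n : nat) (A : 'M[C]_n) : Prop :=
  A ^t* = A /\ forall v : 'cV[C]_n, 0 <= (v ^t* *m A *m v) 0 0.

Definition separable {C : numClosedFieldType} (m n : nat)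
    (X : 'M[C]_(m * n)) : Prop :=
  exists (K : nat) (p : 'I_K -> C) (A : 'I_K -> 'M[C]_m) (B : 'I_K -> 'M[C]_n),
    (forall k, 0 <= p k /\ psd (A k) /\ psd (B k)) /\
    X = \sum_(k < K) p k *: kron (A k) (B k).

Definition entangled {C : numClosedFieldType} (m n : nat)
    (X : 'M[C]_(m * n)) : Prop := psd X /\ ~ separable X.

Definition Qblock {C : numClosedFieldType} (d : nat) (Z : 'M[C]_d)
    (a b : 'I_2) : 'M[C]_d :=
  if val a == 0%N then (if val b == 0%N then 1%:M else Z)
  else (if val b == 0%N then Z ^t* else Z ^t* *m Z).

Definition Qmx {C : numClosedFieldType} (d : nat) (Z : 'M[C]_d) : 'M[C]_(d * 2) :=
  \matrix_(k, l) Qblock Z (bidx k).2 (bidx l).2 (bidx k).1 (bidx l).1.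

(* Q(Z) is the Gram matrix R† R of the block row R = [1 Z], hence positive.
   Every positive matrix is such a Gram matrix (spectral theorem), so tensor
   products and transposes of positive matrices are positive; therefore the
   partial transpose of a separable operator is positive (Peres).  Evaluating
   the partial transpose of Q(Z) at (-Z† y) (x) e_0 + y (x) e_1 gives
   y† (Z† Z - Z Z†) y, so separability would make the commutator
   Z† Z - Z Z† positive; having trace zero it would vanish, i.e. Z would be
   normal. *)

From HB Require Import structures.
From mathcomp Require Import all_boot all_order all_algebra.
Set Implicit Arguments. Unset Strict Implicit. Unset Printing Implicit Defensive.
Import Order.TTheory GRing.Theory Num.Theory.
Local Open Scope ring_scope.
Local Open Scope sesquilinear_scope.

Lemma bidx_mxvec_index m n (i : 'I_m) (a : 'I_n) : bidx (mxvec_index i a) = (i, a).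
Proof. by rewrite /bidx /mxvec_index cast_ordK enum_rankK. Qed.

Lemma mxvec_index_bidx m n (k : 'I_(m * n)) : mxvec_index (bidx k).1 (bidx k).2 = k.
Proof. by case: (mxvec_indexP k) => i a; rewrite bidx_mxvec_index. Qed.

Lemma sum_mxvec_index (R : nmodType) m n (F : 'I_(m * n) -> R) :
  \sum_k F k = \sum_i \sum_a F (mxvec_index i a).
Proof.
rewrite pair_bigA /= (reindex (fun p : 'I_m * 'I_n => mxvec_index p.1 p.2)) //=.
by exists (@bidx m n) => [[i a] _|k _]; rewrite ?bidx_mxvec_index ?mxvec_index_bidx.
Qed.

Lemma sum_ord2 (R : nmodType) (F : 'I_2 -> R) : \sum_a F a = F ord0 + F ord_max.
Proof. by rewrite !big_ord_recl big_ord0 addr0; congr (_ + F _); exact: val_inj. Qed.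

Section Forms.
Variable C : numClosedFieldType.

Definition form n (u : 'cV[C]_n) (M : 'M[C]_n) (w : 'cV[C]_n) : C :=
  (u ^t* *m M *m w) 0 0.

Lemma formE n (u : 'cV[C]_n) M w :
  form u M w = \sum_i \sum_j (u i 0)^* * M i j * w j 0.
Proof.
rewrite /form mxE; under eq_bigr do rewrite mxE big_distrl /=.
rewrite exchange_big /=; apply: eq_bigr => i _; apply: eq_bigr => j _.
by rewrite !mxE.
Qed.

Lemma form_delta n (M : 'M[C]_n) i j : form (delta_mx i 0) M (delta_mx j 0) = M i j.
Proof.
rewrite /form; have -> : (delta_mx i 0 : 'cV[C]_n) ^t* = delta_mx 0 i.
  by apply/matrixP => a b; rewrite !mxE conjC_nat andbC.
by rewrite -(rowE i M) -colE !mxE.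
Qed.

Lemma adj_mul_ge0 m (w : 'cV[C]_m) : 0 <= (w ^t* *m w) 0 0.
Proof. by rewrite mxE; apply: sumr_ge0 => i _; rewrite !mxE mulrC mul_conjC_ge0. Qed.

Lemma mxtrace_adj_mul m n (R : 'M[C]_(m, n)) :
  \tr (R ^t* *m R) = \sum_i \sum_j R j i * (R j i)^*.
Proof.
apply: eq_bigr => i _; rewrite mxE; apply: eq_bigr => j _.
by rewrite !mxE mulrC.
Qed.

End Forms.

Section Psd.
Variable C : numClosedFieldType.

Lemma adjM m n p (A : 'M[C]_(m, n)) (B : 'M[C]_(n, p)) :
  (A *m B) ^t* = B ^t* *m A ^t*.
Proof. by rewrite trmx_mul map_mxM. Qed.

Lemma adjN m n (A : 'M[C]_(m, n)) : (- A) ^t* = - A ^t*.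
Proof. by rewrite linearN map_mxN. Qed.

Lemma adjB m n (A B : 'M[C]_(m, n)) : (A - B) ^t* = A ^t* - B ^t*.
Proof. by rewrite linearB map_mxB. Qed.

Lemma psd_adj_mul m n (R : 'M[C]_(m, n)) : psd (R ^t* *m R).
Proof.
split; first by rewrite adjM trmxCK.
by move=> v; rewrite !mulmxA -adjM -mulmxA adj_mul_ge0.
Qed.

Lemma psd_factor n (A : 'M[C]_n) : psd A -> exists R : 'M[C]_n, A = R ^t* *m R.
Proof.
move=> [hA formA]; have /orthomx_spectralP defA : A \is normalmx.
  by apply/normalmxP; rewrite hA.
set P := spectralmx A in defA; set D := spectral_diag A in defA.
have P_unitary : P \is unitarymx := spectral_unitarymx A.
rewrite invmx_unitary // in defA.
have D_ge0 k : 0 <= D 0 k.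
  have -> : D 0 k = form (P ^t* *m delta_mx k 0) A (P ^t* *m delta_mx k 0).
    rewrite [X in form _ X _]defA /form adjM trmxCK !mulmxA !mulmxtVK //.
    by rewrite -/(form _ _ _) form_delta mxE eqxx mulr1n.
  exact: formA.
pose S : 'M[C]_n := diag_mx (map_mx sqrtC D).
suff SS : S ^t* *m S = diag_mx D by exists (S *m P); rewrite adjM mulmxA -(mulmxA _ _ S) SS.
apply/matrixP => i j; rewrite /S tr_diag_mx map_diag_mx mul_mx_diag !mxE.
have [<-|_] := eqVneq i j; last by rewrite !mulr0n mul0r.
by rewrite !mulr1n /= geC0_conj ?sqrtC_ge0 // -expr2 sqrtCK.
Qed.

Lemma psd_trace_ge0 n (A : 'M[C]_n) : psd A -> 0 <= \tr A.
Proof.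
move=> /psd_factor[R ->]; rewrite mxtrace_adj_mul.
by do 2![apply: sumr_ge0 => ? _]; exact: mul_conjC_ge0.
Qed.

Lemma psd_trace_eq0 n (A : 'M[C]_n) : psd A -> \tr A = 0 -> A = 0.
Proof.
move=> /psd_factor[R ->]; rewrite mxtrace_adj_mul => tr0.
suff -> : R = 0 by rewrite mulmx0.
have sq_ge0 (x : C) : 0 <= x * x^* := mul_conjC_ge0 x.
have col0 i : \sum_j R j i * (R j i)^* = 0.
  by apply: psumr_eq0P tr0 i isT => i' _; apply: sumr_ge0.
apply/matrixP => j i; apply/eqP; rewrite mxE -mul_conjC_eq0; apply/eqP.
exact: psumr_eq0P (col0 i) j isT.
Qed.

Lemma psd_commutator_normalmx n (A : 'M[C]_n) :
  psd (A ^t* *m A - A *m A ^t*) -> A \is normalmx.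
Proof.
move=> /psd_trace_eq0 comm0; apply/normalmxP/esym/subr0_eq/comm0.
by rewrite raddfB /= mxtrace_mulC subrr.
Qed.

Lemma psd0 n : psd (0 : 'M[C]_n).
Proof. by split => [|v]; rewrite ?trmx0 ?map_mx0 // mulmx0 mul0mx mxE. Qed.

Lemma psdD n (A B : 'M[C]_n) : psd A -> psd B -> psd (A + B).
Proof.
move=> [hA fA] [hB fB]; split; first by rewrite linearD map_mxD hA hB.
by move=> v; rewrite mulmxDr mulmxDl mxE addr_ge0.
Qed.

Lemma psdZ n c (A : 'M[C]_n) : 0 <= c -> psd A -> psd (c *: A).
Proof.
move=> c_ge0 [hA fA]; split; first by rewrite linearZ map_mxZ hA /= geC0_conj.
by move=> v; rewrite -scalemxAr -scalemxAl mxE mulr_ge0.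
Qed.

End Psd.

Section Kronecker.
Variable C : numClosedFieldType.

Lemma kronE m n (A : 'M[C]_m) (B : 'M[C]_n) i j a b :
  kron A B (mxvec_index i a) (mxvec_index j b) = A i j * B a b.
Proof. by rewrite mxE !bidx_mxvec_index. Qed.

Lemma kron_mul m n (A A' : 'M[C]_m) (B B' : 'M[C]_n) :
  kron A B *m kron A' B' = kron (A *m A') (B *m B').
Proof.
apply/matrixP => k l; case/mxvec_indexP: k => i a; case/mxvec_indexP: l => j b.
rewrite kronE [LHS]mxE sum_mxvec_index !mxE big_distrl /=.
apply: eq_bigr => i' _; rewrite big_distrr /=; apply: eq_bigr => a' _.
by rewrite !kronE mulrACA.
Qed.

Lemma kron_adj m n (A : 'M[C]_m) (B : 'M[C]_n) : (kron A B) ^t* = kron (A ^t*) (B ^t*).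
Proof. by apply/matrixP => k l; rewrite !mxE rmorphM. Qed.

Lemma psd_kron m n (A : 'M[C]_m) (B : 'M[C]_n) : psd A -> psd B -> psd (kron A B).
Proof.
by move=> /psd_factor[R ->] /psd_factor[S ->]; rewrite -kron_mul -kron_adj; exact: psd_adj_mul.
Qed.

Lemma psd_trmx n (B : 'M[C]_n) : psd B -> psd B^T.
Proof.
move=> /psd_factor[R ->]; suff -> : (R ^t* *m R)^T = (map_mx Num.conj R) ^t* *m map_mx Num.conj R.
  exact: psd_adj_mul.
by apply/matrixP => i j; rewrite !mxE; apply: eq_bigr => k _; rewrite !mxE conjCK mulrC.
Qed.

Definition ptrans m n (X : 'M[C]_(m * n)) : 'M[C]_(m * n) :=
  \matrix_(k, l) X (mxvec_index (bidx k).1 (bidx l).2) (mxvec_index (bidx l).1 (bidx k).2).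

Lemma ptransE m n (X : 'M[C]_(m * n)) i j a b :
  ptrans X (mxvec_index i a) (mxvec_index j b) = X (mxvec_index i b) (mxvec_index j a).
Proof. by rewrite mxE !bidx_mxvec_index. Qed.

Lemma ptransZ m n c (X : 'M[C]_(m * n)) : ptrans (c *: X) = c *: ptrans X.
Proof. by apply/matrixP => k l; rewrite !mxE. Qed.

Lemma separable_psd m n (X : 'M[C]_(m * n)) : separable X -> psd X.
Proof.
move=> [K [p [A [B [hk ->]]]]].
apply: (big_ind (fun Y : 'M[C]_(m * n) => psd Y)); [exact: psd0 | exact: psdD | move=> k _].
have [p_ge0 [psdA psdB]] := hk k.
by apply: psdZ => //; apply: psd_kron.
Qed.

Lemma separable_ptrans m n (X : 'M[C]_(m * n)) : separable X -> separable (ptrans X).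
Proof.
move=> [K [p [A [B [hk ->]]]]]; exists K, p, A, (fun k => (B k)^T); split.
  by move=> k; have [? [? ?]] := hk k; do 2!split => //; exact: psd_trmx.
apply/matrixP => k l; case/mxvec_indexP: k => i a; case/mxvec_indexP: l => j b.
rewrite ptransE !summxE; apply: eq_bigr => k _.
by rewrite !mxE !bidx_mxvec_index.
Qed.

End Kronecker.

Section Blocks.
Variable C : numClosedFieldType.

Definition tensvec m n (u : 'I_n -> 'cV[C]_m) : 'cV[C]_(m * n) :=
  \col_k u (bidx k).2 (bidx k).1 0.

Definition tblock m n (X : 'M[C]_(m * n)) (a b : 'I_n) : 'M[C]_m :=
  \matrix_(i, j) X (mxvec_index i a) (mxvec_index j b).

Lemma form_tensvec m n (u : 'I_n -> 'cV[C]_m) (X : 'M[C]_(m * n)) :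
  form (tensvec u) X (tensvec u) = \sum_a \sum_b form (u a) (tblock X a b) (u b).
Proof.
rewrite formE sum_mxvec_index exchange_big; apply: eq_bigr => a _.
under eq_bigr do rewrite sum_mxvec_index exchange_big.
rewrite exchange_big; apply: eq_bigr => b _; rewrite formE.
by apply: eq_bigr => i _; apply: eq_bigr => j _; rewrite !mxE !bidx_mxvec_index.
Qed.

End Blocks.

Section NonNormal.
Variables (C : numClosedFieldType) (d : nat) (Z : 'M[C]_d).

Lemma Qblock_adj_mul a b : (Qblock Z ord0 a) ^t* *m Qblock Z ord0 b = Qblock Z a b.
Proof.
rewrite /Qblock /=; have adj1 : (1%:M : 'M[C]_d) ^t* = 1%:M by rewrite trmx1 map_mx1.
by case: ifP; case: ifP; rewrite ?adj1 ?mul1mx ?mulmx1.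
Qed.

Definition Qrow : 'M[C]_(d, d * 2) := \matrix_(i, l) Qblock Z ord0 (bidx l).2 i (bidx l).1.

Lemma Qmx_adj_mul : Qmx Z = Qrow ^t* *m Qrow.
Proof.
apply/matrixP => k l; rewrite !mxE -Qblock_adj_mul mxE.
by apply: eq_bigr => i _; rewrite !mxE.
Qed.

Lemma psd_Qmx : psd (Qmx Z).
Proof. rewrite Qmx_adj_mul; exact: psd_adj_mul. Qed.

Lemma tblock_ptrans_Qmx a b : tblock (ptrans (Qmx Z)) a b = Qblock Z b a.
Proof. by apply/matrixP => i j; rewrite !mxE !bidx_mxvec_index. Qed.

Definition Qwitness (y : 'cV[C]_d) : 'cV[C]_(d * 2) :=
  tensvec (fun a : 'I_2 => if val a == 0%N then - (Z ^t* *m y) else y).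

Lemma form_ptrans_Qmx (y : 'cV[C]_d) :
  form (Qwitness y) (ptrans (Qmx Z)) (Qwitness y) = form y (Z ^t* *m Z - Z *m Z ^t*) y.
Proof.
rewrite form_tensvec !sum_ord2 !tblock_ptrans_Qmx /Qblock /= /form.
rewrite adjN adjM trmxCK mulmx1 !mulmxN !mulNmx opprK mulmxBr mulmxBl !mulmxA.
set P := y ^t* *m Z *m Z ^t* *m y; set N := y ^t* *m Z ^t* *m Z *m y.
by rewrite [(N - P) 0 0]mxE [(- P) 0 0]mxE subrr add0r addrC.
Qed.

Lemma psd_commutator_ptrans_Qmx :
  psd (ptrans (Qmx Z)) -> psd (Z ^t* *m Z - Z *m Z ^t*).
Proof.
move=> [_ psdPQ]; split; first by rewrite adjB !adjM trmxCK.
by move=> y; rewrite -/(form _ _ _) -form_ptrans_Qmx; exact: psdPQ.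
Qed.

Lemma Qmx_trace_gt0 : (0 < d)%N -> 0 < \tr (Qmx Z).
Proof.
move=> d_gt0; rewrite lt_def (psd_trace_ge0 psd_Qmx) andbT.
apply/eqP => /(psd_trace_eq0 psd_Qmx)/matrixP/(_ (mxvec_index (Ordinal d_gt0) ord0)).
move=> /(_ (mxvec_index (Ordinal d_gt0) ord0)); rewrite !mxE !bidx_mxvec_index /=.
by rewrite /Qblock /= mxE eqxx => /eqP; rewrite oner_eq0.
Qed.

End NonNormal.

Theorem mainTheorem2 (C : numClosedFieldType) (d : nat) (Z : 'M[C]_d)
    (hZ : Z \isn't normalmx) :
  psd (Qmx Z) /\ entangled ((\tr (Qmx Z))^-1 *: Qmx Z).
Proof.
have d_gt0 : (0 < d)%N.
  by case: d Z hZ => // Z /negP[]; apply/normalmxP; rewrite [LHS]flatmx0 [RHS]flatmx0.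
have tr_gt0 := Qmx_trace_gt0 Z d_gt0; set c := \tr (Qmx Z) in tr_gt0 *.
have psdQ := psd_Qmx Z; do 2!split => //; first by apply: psdZ; rewrite ?invr_ge0 ?ltW.
move/separable_ptrans/separable_psd; rewrite ptransZ => /(psdZ (ltW tr_gt0)).
rewrite scalerA divff ?gt_eqF // scale1r => /psd_commutator_ptrans_Qmx.
by move/psd_commutator_normalmx; exact/negP.
Qed.
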